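(* Let $\|\cdot\|_W$ be the wedge norm on $\mathbb{R}^p$ and let $S_\star=\{1,\dots,s\}$ with $s\in\{1,\dots,p-1\}$. Then for all $\beta\in\mathbb{R}^p$, $$\|\beta_{S_\star^{c}}\|_W\le\sqrt{|S_\star|+1}\;\Omega^{S_\star^{c}}(\beta_{S_\star^{c}}),$$ i.e. the constant $C_{S_\star}$ can be taken equal to $\sqrt{|S_\star|+1}$.
   Context: Let $\mathcal{A}:=\{a\in\mathbb{R}^p: a_j>0\ \forall j,\ a_1\ge\dots\ge a_p\}$ and $\|\beta\|_W:=\inf_{a\in\mathcal{A}}\frac12\sum_{j=1}^p\big(\beta_j^2/a_j+a_j\big)$. For $S=\{1,\dots,s\}$, $\beta_{S^c}$ is the vector in $\mathbb{R}^p$ with entries $\beta_j1\{j\notin S\}$, $\mathcal{A}_{S^c}:=\{(a_j)_{j\in S^c}:a\in\mathcal{A}\}$ and $\Omega^{S^c}(\beta_{S^c}):=\inf_{a\in\mathcal{A}_{S^c}}\frac12\sum_{j\in S^c}\big(\beta_j^2/a_j+a_j\big)$. *)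

From mathcomp Require Import all_boot all_order all_algebra.
From mathcomp Require Import all_classical all_reals.
Set Implicit Arguments. Unset Strict Implicit. Unset Printing Implicit Defensive.
Import Order.TTheory GRing.Theory Num.Theory.
Local Open Scope ring_scope.
Local Open Scope classical_set_scope.

(* The cone A = {a in R^p : a_j > 0 for all j, a_1 >= ... >= a_p}
   (indices are 0-based: 'I_p = {0,...,p-1}). *)
Definition wedge_cone (R : realType) (p : nat) : set ('I_p -> R) :=
  [set a | (forall j, 0 < a j) /\ (forall i j : 'I_p, (i <= j)%N -> a j <= a i)].

Definition wedge_norm (R : realType) (p : nat) (beta : 'I_p -> R) : R :=
  inf [set (2^-1 * \sum_(j < p) (beta j ^+ 2 / a j + a j)) | a in @wedge_cone R p].

(* S = {1,...,s} corresponds to the 0-based indices j < s.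
   beta_{S^c} : entries beta_j 1{j notin S}. *)
Definition restrict_Sc (R : realType) (p s : nat) (beta : 'I_p -> R) : 'I_p -> R :=
  fun j => if (s <= j)%N then beta j else 0.

(* Omega^{S^c}(beta_{S^c}) = inf over A_{S^c} = {(a_j)_{j in S^c} : a in A}
   of 1/2 sum_{j in S^c} (beta_j^2/a_j + a_j); written as inf over a in A
   of the expression depending only on (a_j)_{j in S^c}. *)
Definition Omega_Sc (R : realType) (p s : nat) (beta : 'I_p -> R) : R :=
  inf [set (2^-1 * \sum_(j < p | (s <= j)%N) (beta j ^+ 2 / a j + a j))
      | a in @wedge_cone R p].

From mathcomp Require Import all_boot all_order all_algebra.
From mathcomp Require Import all_classical all_reals.
From mathcomp Require Import zify.
Set Implicit Arguments. Unset Strict Implicit. Unset Printing Implicit Defensive.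
Import Order.TTheory GRing.Theory Num.Theory.
Local Open Scope ring_scope.

(* Fix [a] in the cone and put [q = sqrt (s + 1)].  Raising the first [s]
   entries of [a] to [a_s] and dividing by [q] stays in the cone.  As
   [beta_{S^c}] vanishes on [S], the wedge objective at that point is
   [q U + (A + s a_s) / q], with [U = sum_{j >= s} beta_j^2 / a_j] and
   [A = sum_{j >= s} a_j]; since [a_s <= A] and [q^2 = s + 1] this is at most
   [q (U + A)], i.e. [q] times the objective of [Omega^{S^c}] at [a]. *)

Section WedgeCone.
Variables (R : realType) (p : nat).
Implicit Types (a beta : 'I_p -> R).

Definition raise_head (k : 'I_p) a : 'I_p -> R :=
  fun j => if (k <= j)%N then a j else a k.

Lemma wedge_coneZ c a :
  0 < c -> wedge_cone a -> wedge_cone (fun j => c * a j).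
Proof.
move=> c0 [a0 anti]; split=> [j|i j ij]; first exact: mulr_gt0.
by rewrite ler_pM2l // anti.
Qed.

Lemma wedge_cone_raise_head (k : 'I_p) a :
  wedge_cone a -> wedge_cone (raise_head k a).
Proof.
rewrite /raise_head => -[a0 anti]; split=> [j|i j ij]; first by case: ifP.
case: ifP => kj; case: ifP => ki; rewrite ?anti //.
by move: kj; rewrite (leq_trans ki ij).
Qed.

Lemma wedge_norm_le beta a :
  wedge_cone a -> wedge_norm beta <= 2^-1 * \sum_(j < p) (beta j ^+ 2 / a j + a j).
Proof.
move=> ain; apply: ge_inf; last by exists a.
exists 0 => _ [a' [a'0 _] <-]; rewrite mulr_ge0 ?invr_ge0 ?sumr_ge0 // => j _.
by rewrite addr_ge0 ?divr_ge0 ?sqr_ge0 ?ltW.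
Qed.

Lemma Omega_Sc_ge s beta x :
  (forall a, wedge_cone a ->
     x <= 2^-1 * \sum_(j < p | (s <= j)%N) (beta j ^+ 2 / a j + a j)) ->
  x <= Omega_Sc s beta.
Proof.
move=> xlb; apply: lb_le_inf => [|_ [a ain <-]]; last exact: xlb.
by eexists; exists (fun _ => 1).
Qed.

End WedgeCone.

Lemma sum_quad_over_scaled (R : fieldType) (I : finType) (P : pred I)
    (beta a : I -> R) c :
  \sum_(j | P j) (beta j ^+ 2 / (c^-1 * a j) + c^-1 * a j)
    = c * \sum_(j | P j) beta j ^+ 2 / a j + c^-1 * \sum_(j | P j) a j.
Proof.
rewrite !mulr_sumr -big_split; apply: eq_bigr => j _.
by rewrite invfM invrK mulrCA.
Qed.

Lemma sum_ord_lt_const (R : nmodType) (p k : nat) (x : R) :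
  (k <= p)%N -> \sum_(j < p | ~~ (k <= j)%N) x = x *+ k.
Proof.
move=> kp; rewrite (eq_bigl (fun j : 'I_p => (j < k)%N)) => [|j]; last by rewrite ltnNge.
by rewrite (big_ord_narrow kp) sumr_const card_ord.
Qed.

Lemma head_tail_tradeoff (R : realFieldType) (k : nat) (q ak A : R) :
  0 < q -> q ^+ 2 = k%:R + 1 -> ak <= A ->
  q^-1 * A + k%:R * (q^-1 * ak) <= q * A.
Proof.
move=> q0 q2 akA.
have -> : q * A = q^-1 * (q ^+ 2 * A) by rewrite mulrA expr2 mulrA mulVf ?mul1r ?gt_eqF.
rewrite mulrCA -mulrDr ler_pM2l ?invr_gt0 // q2 mulrDl mul1r addrC lerD2r.
by rewrite ler_wpM2l.
Qed.

Lemma wedge_obj_raise_head_le (R : realType) (p : nat) (k : 'I_p) (q : R)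
    (beta a : 'I_p -> R) :
  0 < q -> q ^+ 2 = k%:R + 1 ->
  wedge_cone a -> (forall j : 'I_p, (j < k)%N -> beta j = 0) ->
  \sum_(j < p) (beta j ^+ 2 / (q^-1 * raise_head k a j) + q^-1 * raise_head k a j)
    <= q * \sum_(j < p | (k <= j)%N) (beta j ^+ 2 / a j + a j).
Proof.
move=> q0 q2 [a0 _] beta_head; rewrite /raise_head.
rewrite (bigID (fun j : 'I_p => (k <= j)%N)) /=.
rewrite [X in X + _](eq_bigr (fun j => beta j ^+ 2 / (q^-1 * a j) + q^-1 * a j)) => [|j ->] //.
rewrite [X in _ + X](eq_bigr (fun _ => q^-1 * a k)) => [|j kj]; last first.
  by rewrite (negbTE kj) beta_head ?ltnNge // expr0n mul0r add0r.
rewrite sum_ord_lt_const ?(ltnW (ltn_ord k)) //.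
rewrite sum_quad_over_scaled big_split /= mulrDr -addrA lerD2l -mulr_natl.
apply: head_tail_tradeoff => //.
by rewrite (bigD1 k) //= lerDl sumr_ge0 // => j _; rewrite ltW.
Qed.

Theorem lemma7 (R : realType) (p s : nat) (hs1 : (1 <= s)%N) (hsp : (s <= p - 1)%N)
  (beta : 'I_p -> R) :
  wedge_norm (restrict_Sc s beta)
    <= Num.sqrt (s%:R + 1) * Omega_Sc s (restrict_Sc s beta).
Proof.
have sp : (s < p)%N by lia.
pose k : 'I_p := Ordinal sp.
set q := Num.sqrt (s%:R + 1 : R).
have q0 : 0 < q by rewrite sqrtr_gt0 ltr_pwDr.
have beta_head : forall j : 'I_p, (j < k)%N -> restrict_Sc s beta j = 0.
  by move=> j jk; rewrite /restrict_Sc leqNgt jk.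
rewrite -ler_pdivrMl //; apply: Omega_Sc_ge => a ain.
rewrite ler_pdivrMl // mulrCA.
have a'_in : wedge_cone (fun j => q^-1 * raise_head k a j).
  by apply: wedge_coneZ; rewrite ?invr_gt0 //; exact: wedge_cone_raise_head.
apply: le_trans (wedge_norm_le _ a'_in) _.
rewrite ler_pM2l ?invr_gt0 ?ltr0n //.
by apply: wedge_obj_raise_head_le ain beta_head; rewrite ?sqr_sqrtr ?addr_ge0.
Qed.
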